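(* Let $X$ be compact Hausdorff, $(H,e)$ a unital Hilbert space, and $T:C(X)\to H$ a unital positive linear map whose associated probability measure $\mu$ (defined by $(Tv,e)=\int v\,d\mu$) is atomic with finite support. Then $T$ is separable. In particular, for every $n$, every unital positive linear map $T:\ell^\infty(n)\to H$ is separable and satisfies $T^{(m)}(M_m(\ell^\infty(n))_+)\subseteq\max\mathfrak c_e$ for all $m$.
   Context: A Hilbert $*$-space is a complex Hilbert space (inner product linear in the first variable) with a conjugate-linear $\zeta\mapsto\zeta^*$, $\zeta^{**}=\zeta$, $(\zeta^*,\eta^* )=\overline{(\zeta,\eta)}$. A unital Hilbert space $(H,e)$ has a fixed hermitian unit vector $e$ and cone $\mathfrak c_e=\{\zeta\in H_h:\|\zeta\|\le\sqrt2(\zeta,e)\}$. $T:C(X)\to H$ is unital positive if $T(1)=e$, $T(C(X)_+)\subseteq\mathfrak c_e$. $T$ is separable if there are positive Radon measures $q_l$ and $p_l\in\mathfrak c_e$ with $Tv=\lim_k\sum_{l\le k}(\int v\,dq_l)p_l$ for all $v$. $\ell^\infty(n)=C(\{1,\dots,n\})$; $M_m(\ell^\infty(n))_+$ are matrices positive semidefinite at each point; $T^{(m)}[v_{ij}]=[Tv_{ij}]$. $\max\mathfrak c_e$: with $\overline H$ the conjugate space, $\mathfrak c_e^\boxdot=\{\bar\eta\in M_n(\overline H)_h:[(\xi,\eta_{st})]\ge0\ \forall\xi\in\mathfrak c_e\}$, $\max\mathfrak c_e\cap M_m(H)=\{\zeta\in M_m(H)_h:[(\zeta_{ik},\eta_{jl})]_{(i,j),(k,l)}\ge0\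 \forall\bar\eta\in\mathfrak c_e^\boxdot\}$, matrices carrying the involution $[x_{ij}]^*=[x_{ji}^*]$. *)

From HB Require Import structures.
From mathcomp Require Import all_boot all_order all_algebra.
From mathcomp Require Import all_classical all_reals all_analysis.
From mathcomp Require Import complex.

Set Implicit Arguments.
Unset Strict Implicit.
Unset Printing Implicit Defensive.

Import Order.TTheory GRing.Theory Num.Theory.
Import numFieldNormedType.Exports.

Local Open Scope classical_set_scope.
Local Open Scope ring_scope.

(* [ip] is the inner product (linear in the first variable), [hs] the  *)
(* conjugate-linear involution zeta |-> zeta^*.                        *)

Section HilbertStar.
Variables (R : realType) (H : lmodType R[i]).
Variables (ip : H -> H -> R[i]) (hs : H -> H).

Definition hnorm (x : H) : R := Num.sqrt (complex.Re (ip x x)).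

Record hilbert_star_space : Prop := HilbertStarSpace {
  ip_linl : forall (a : R[i]) (x y z : H), ip (a *: x + y) z = a * ip x z + ip y z;
  ip_conj : forall x y : H, ip y x = (ip x y)^*;
  ip_ge0 : forall x : H, 0 <= ip x x;
  ip_eq0 : forall x : H, ip x x = 0 -> x = 0;
  ip_complete : forall u : nat -> H,
    (forall eps : R, 0 < eps -> exists N : nat, forall m n : nat,
        (N <= m)%N -> (N <= n)%N -> hnorm (u m - u n) < eps) ->
    exists l : H, (fun k => hnorm (u k - l)) @ \oo --> (0 : R);
  hs_semilinear : forall (a : R[i]) (x y : H), hs (a *: x + y) = a^* *: hs x + hs y;
  hs_invol : forall x : H, hs (hs x) = x;
  hs_ip : forall x y : H, ip (hs x) (hs y) = (ip x y)^* }.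

Definition unital_vector (e : H) : Prop := hs e = e /\ hnorm e = 1.

Definition cone_e (e : H) (z : H) : Prop :=
  hs z = z /\ ((hnorm z)%:C)%C <= ((Num.sqrt 2)%:C)%C * ip z e.

Definition psd (I : finType) (A : I -> I -> R[i]) : Prop :=
  forall x : I -> R[i], 0 <= \sum_(i : I) \sum_(j : I) (x i)^* * A i j * x j.

(* the dual cone c_e^boxdot at level n: eta_bar in M_n(conj H)_h, i.e.
   eta_{st} = (eta_{ts})^*, with [(xi, eta_st)] >= 0 for all xi in c_e *)
Definition dual_cone_e (e : H) (n : nat) (eta : 'I_n -> 'I_n -> H) : Prop :=
  (forall s t, eta s t = hs (eta t s)) /\
  forall xi : H, cone_e e xi -> psd (fun s t => ip xi (eta s t)).

Definition max_cone_e (e : H) (m : nat) (zeta : 'I_m -> 'I_m -> H) : Prop :=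
  (forall i k, zeta i k = hs (zeta k i)) /\
  forall (n : nat) (eta : 'I_n -> 'I_n -> H), dual_cone_e e eta ->
    psd (fun (a b : 'I_m * 'I_n) => ip (zeta a.1 b.1) (eta a.2 b.2)).

End HilbertStar.

Section CX.
Variables (R : realType) (X : ptopologicalType).

Definition cts (v : X -> R[i]) : Prop :=
  continuous (fun x => complex.Re (v x)) /\ continuous (fun x => complex.Im (v x)).

Definition borelX := g_sigma_algebraType (@open X).

Definition radon (mu : {measure set borelX -> \bar R}) : Prop :=
  (mu setT < +oo)%E /\
  (forall A : set borelX, measurable A ->
     mu A = ereal_inf [set mu U | U in [set U : set X | open U /\ A `<=` U]]) /\
  (forall A : set borelX, measurable A ->
     mu A = ereal_sup [set mu K | K in [set K : set X | compact K /\ K `<=` A]]).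

Definition cint (mu : {measure set borelX -> \bar R}) (v : X -> R[i]) : R[i] :=
  (fine (\int[mu]_x (complex.Re (v x))%:E) +i* fine (\int[mu]_x (complex.Im (v x))%:E))%C.

Variables (H : lmodType R[i]) (ip : H -> H -> R[i]) (hs : H -> H) (e : H).

Definition unital_positive (T : (X -> R[i]) -> H) : Prop :=
  (forall (a : R[i]) (u v : X -> R[i]), cts u -> cts v ->
      T (fun x => a * u x + v x) = a *: T u + T v) /\
  T (fun _ => 1) = e /\
  (forall v, cts v -> (forall x, 0 <= v x) -> cone_e ip hs e (T v)).

Definition separable_map (T : (X -> R[i]) -> H) : Prop :=
  exists (q : nat -> {measure set borelX -> \bar R}) (p : nat -> H),
    (forall l, radon (q l)) /\ (forall l, cone_e ip hs e (p l)) /\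
    forall v, cts v ->
      (fun k => hnorm ip (T v - \sum_(l < k) cint (q l) v *: p l)) @ \oo --> (0 : R).

Definition assoc_measure_finite_atomic (T : (X -> R[i]) -> H) : Prop :=
  exists mu : {measure set borelX -> \bar R},
    radon mu /\ mu setT = 1%E /\
    (forall v, cts v -> ip (T v) e = cint mu v) /\
    exists F : set X, finite_set F /\ mu (~` F) = 0%E.

End CX.

(* l^infty(n) = C({1,...,n}): the n-point discrete space, modelled by
   'I_n.-1.+1 (which is 'I_n whenever n > 0; the statement assumes 0 < n,
   the case n = 0 being vacuous).  'I_n.-1.+1 is pointed,
   which MathComp-Analysis' measure theory requires. *)
Definition linfty (n : nat) : Type := 'I_n.-1.+1.
HB.instance Definition _ n := Choice.on (linfty n).
HB.instance Definition _ n := isPointed.Build (linfty n) ord0.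
HB.instance Definition _ n :=
  DiscreteTopology.copy (linfty n) (discrete_topology 'I_n.-1.+1).

From HB Require Import structures.
From mathcomp Require Import all_boot all_order all_algebra.
From mathcomp Require Import all_classical all_reals all_analysis.
From mathcomp Require Import complex.
From mathcomp Require Import ring measurable_realfun finmap.
Set Implicit Arguments.
Unset Strict Implicit.
Unset Printing Implicit Defensive.
Import Order.TTheory GRing.Theory Num.Theory.
Import numFieldNormedType.Exports.

(* If the measure of [T] is carried by a finite set [F], then a continuous [v]
   vanishing on [F] has [T v = 0]: splitting [v] into nonnegative parts [w],
   each [T w] lies in the cone and [(T w, e) = \int w dmu = 0], so [T w = 0].
   Interpolating [v] on [F] by Urysohn bumps [h_x] thus gives the finite
   expansion [T v = \sum_(x in F) v x *: T h_x], i.e. a separable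
   decomposition with Dirac measures.  On l^oo(n) the same expansion uses the
   point indicators, and pairing [T^(m) v = \sum_t v t (x) T (indicator t)]
   with an element of the dual cone yields a sum of Kronecker products of psd
   matrices, which is psd by the Schur product theorem. *)

Local Open Scope ring_scope.

Section PsdForms.
Variable C : numClosedFieldType.

Section OneIndex.
Variable I : finType.
Implicit Types (A : I -> I -> C) (x y : I -> C).

Definition sesq A x y : C := \sum_i \sum_j (x i)^* * A i j * y j.

Definition is_psd A : Prop := forall x, 0 <= sesq A x x.

Definition delta i (a : C) : I -> C := fun j => (j == i)%:R * a.

Lemma sum_delta i (F : I -> C) : \sum_j (j == i)%:R * F j = F i.
Proof.
rewrite (bigD1 i) //= eqxx mul1r big1 ?addr0 // => j /negbTE ->.
by rewrite mul0r.
Qed.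

Lemma sesqDl A x1 x2 y : sesq A (x1 \+ x2) y = sesq A x1 y + sesq A x2 y.
Proof.
rewrite /sesq -big_split; apply: eq_bigr => i _; rewrite -big_split.
by apply: eq_bigr => j _; rewrite rmorphD !mulrDl.
Qed.

Lemma sesqDr A x y1 y2 : sesq A x (y1 \+ y2) = sesq A x y1 + sesq A x y2.
Proof.
rewrite /sesq -big_split; apply: eq_bigr => i _; rewrite -big_split.
by apply: eq_bigr => j _; rewrite mulrDr.
Qed.

Lemma sesq_deltal A i a y : sesq A (delta i a) y = a^* * \sum_j A i j * y j.
Proof.
rewrite /sesq -(sum_delta i (fun k => a^* * \sum_j A k j * y j)).
apply: eq_bigr => k _; rewrite mulr_sumr mulr_sumr; apply: eq_bigr => j _.
by rewrite /delta rmorphM /= conjC_nat !mulrA.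
Qed.

Lemma sesq_deltar A x k b : sesq A x (delta k b) = (\sum_i (x i)^* * A i k) * b.
Proof.
rewrite /sesq mulr_suml; apply: eq_bigr => i _.
rewrite -(sum_delta k (fun j => (x i)^* * A i j * b)).
by apply: eq_bigr => j _; rewrite /delta mulrCA mulrA.
Qed.

Lemma sesq_delta A i k a b : sesq A (delta i a) (delta k b) = a^* * A i k * b.
Proof.
rewrite sesq_deltal -mulrA; congr (_ * _).
by rewrite -(sum_delta k (fun j => A i j * b)); apply: eq_bigr => j _; rewrite /delta mulrCA.
Qed.

Lemma eq_psd A A' : (forall i j, A i j = A' i j) -> is_psd A -> is_psd A'.
Proof.
move=> eA pA x; rewrite /sesq.
by under eq_bigr do under eq_bigr do rewrite -eA; exact: pA.
Qed.

Section PsdMatrix.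
Variable A : I -> I -> C.
Hypothesis pA : is_psd A.

Lemma psd_diag_ge0 i : 0 <= A i i.
Proof.
by have := pA (delta i 1); rewrite sesq_delta conjC1 mul1r mulr1.
Qed.

Lemma psd_pair_ge0 i k a b :
  0 <= a^* * A i i * a + a^* * A i k * b + b^* * A k i * a + b^* * A k k * b.
Proof.
by have := pA (delta i a \+ delta k b); rewrite !(sesqDl, sesqDr) !sesq_delta !addrA.
Qed.

(* Positivity at [delta i 1 \+ delta k c] for [c = 1] and [c = 'i] makes
   [A i k + A k i] and ['i * (A i k - A k i)] real. *)
Lemma psd_herm i k : A k i = (A i k)^*.
Proof.
have h1 := psd_pair_ge0 i k 1 1; have h2 := psd_pair_ge0 i k 1 'i.
have dii := conj_Creal (ger0_real (psd_diag_ge0 i)).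
have dkk := conj_Creal (ger0_real (psd_diag_ge0 k)).
have H1 := conj_Creal (ger0_real h1); have H2 := conj_Creal (ger0_real h2).
move: H1 H2; rewrite !rmorphD /= !rmorphM /= !conjCK !conjC1 !dii !dkk conjCi.
set a := A i k; set b := A k i => H1 H2.
rewrite !mul1r !mulr1 in H1 H2.
have i2 : 'i * 'i = -1 :> C by rewrite -expr2 sqrCi.
have key : (a^* - b) * 2 =
  ((A i i + a^* + b^* + A k k) - (A i i + a + b + A k k)) +
  'i * ((A i i + a^* * - 'i + 'i * b^* + 'i * A k k * - 'i) -
        (A i i + a * 'i + - 'i * b + - 'i * A k k * 'i)) +
  ('i * 'i + 1) * (a^* - b^* + a - b) by ring.
move: key; rewrite H1 H2 i2 !subrr addNr mul0r mulr0 !addr0.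
by move/eqP; rewrite mulf_eq0 pnatr_eq0 orbF subr_eq0 => /eqP ->.
Qed.

Lemma psd_row_eq0 s j : A s s = 0 -> A s j = 0.
Proof.
move=> ss0; have [->//|nsj] := eqVneq j s.
apply/eqP/negP => /negP a0; set a := A s j in a0.
set d := A j j; have dr : d^* = d := conj_Creal (ger0_real (psd_diag_ge0 j)).
(* With [t] chosen as below, the form at [delta s t \+ delta j 1] equals [-1]. *)
set t := - (d + 1) / (2 * a^*).
have tc : t^* = - (d + 1) / (2 * a).
  by rewrite fmorph_div /= rmorphN rmorphD rmorphM /= dr conjC1 conjC_nat conjCK.
have := psd_pair_ge0 s j t 1.
rewrite ss0 (psd_herm s j) -/a -/d conjC1 mulr0 mul0r add0r !mul1r !mulr1 tc /t.
have -> : - (d + 1) / (2 * a) * a + a^* * (- (d + 1) / (2 * a^*)) + d = -1.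
  by field; rewrite conjC_eq0 a0.
by rewrite ler0N1.
Qed.

Lemma psd_schur s : A s s != 0 ->
  is_psd (fun i j => A i j - A i s * A s j / A s s).
Proof.
move=> c0 x; set c := A s s in c0 *.
have cr : c^* = c := conj_Creal (ger0_real (psd_diag_ge0 s)).
set c' := \sum_j A s j * x j.
have col_sE : \sum_i (x i)^* * A i s = c'^*.
  rewrite /c' rmorph_sum; apply: eq_bigr => i _.
  by rewrite rmorphM /= (psd_herm s i) mulrC.
have -> : sesq (fun i j => A i j - A i s * A s j / c) x x =
    sesq A x x - c'^* * c' / c.
  rewrite /sesq -col_sE /c' mulr_suml mulr_suml -sumrB; apply: eq_bigr => i _.
  rewrite mulr_sumr mulr_suml -sumrB; apply: eq_bigr => j _.
  by field.
set t := - c' / c.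
have tc : t^* = - c'^* / c by rewrite fmorph_div /= rmorphN cr.
have := pA (x \+ delta s t).
rewrite !(sesqDl, sesqDr) sesq_deltar sesq_deltal sesq_delta col_sE -/c' -/c tc /t.
suff -> : sesq A x x + c'^* * (- c' / c) +
   (- c'^* / c * c' + - c'^* / c * c * (- c' / c)) = sesq A x x - c'^* * c' / c by [].
by field.
Qed.

End PsdMatrix.

Lemma psd_sum (K : finType) (M : K -> I -> I -> C) :
  (forall k, is_psd (M k)) -> is_psd (fun i j => \sum_k M k i j).
Proof.
move=> pM x; rewrite /sesq.
suff -> : \sum_i \sum_j (x i)^* * (\sum_k M k i j) * x j = \sum_k sesq (M k) x x.
  by apply: sumr_ge0 => k _; exact: pM.
rewrite /sesq [RHS]exchange_big; apply: eq_bigr => i _ /=.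
rewrite [RHS]exchange_big; apply: eq_bigr => j _ /=.
by rewrite mulr_sumr mulr_suml.
Qed.

Definition rank1_combination A : Prop :=
  exists k (w : nat -> C) (u : nat -> I -> C), (forall l, 0 <= w l) /\
    forall i j, A i j = \sum_(l < k) w l * u l i * (u l j)^*.

(* Schur-complement elimination, one row of the support at a time. *)
Lemma psd_rank1_combination A : is_psd A -> rank1_combination A.
Proof.
move=> pA; suff /(_ (enum I) A pA) : forall (s : seq I) A, is_psd A ->
    (forall i j, i \notin s -> A i j = 0) -> rank1_combination A.
  by apply=> i j; rewrite mem_enum.
elim=> [|s r IH] {}A {}pA sA.
  by exists 0%N, (fun=> 0), (fun _ _ => 0); split => // i j; rewrite big_ord0 sA.
have outside i j : i != s -> i \notin r -> A i j = 0.
  by move=> si ir; apply: sA; rewrite in_cons negb_or si.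
have [ss0|ss0] := eqVneq (A s s) 0.
  apply: IH => // i j ir; have [->|si] := eqVneq i s; last exact: outside.
  exact: psd_row_eq0.
have schur_outside i j : i \notin r -> A i j - A i s * A s j / A s s = 0.
  move=> ir; have [->|si] := eqVneq i s.
    by rewrite mulrAC divff // mul1r subrr.
  by rewrite (outside i j) ?(outside i s) // !mul0r subrr.
have [k [w [u [w0 Ae]]]] := IH _ (psd_schur pA ss0) schur_outside.
exists k.+1, (fun l => if l is l'.+1 then w l' else (A s s)^-1),
  (fun l => if l is l'.+1 then u l' else fun i => A i s); split.
  by case=> //; rewrite invr_ge0 psd_diag_ge0.
move=> i j; rewrite big_ord_recl /= -(psd_herm pA j s) -Ae.
by ring.
Qed.

End OneIndex.

Section Kronecker.
Variables (I J : finType) (B : J -> J -> C).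
Hypothesis pB : is_psd B.

Lemma psd_rank1_kron (w : C) (u : I -> C) : 0 <= w ->
  is_psd (fun a b : I * J => w * u a.1 * (u b.1)^* * B a.2 b.2).
Proof.
move=> w0 x.
set y := fun l => \sum_k (u k)^* * x (k, l).
have yc j : (y j)^* = \sum_i u i * (x (i, j))^*.
  by rewrite rmorph_sum; apply: eq_bigr => i _; rewrite rmorphM /= conjCK.
suff -> : sesq (fun a b : I * J => w * u a.1 * (u b.1)^* * B a.2 b.2) x x =
          w * sesq B y y by exact: mulr_ge0.
have pairE (G : I * J -> C) : \sum_p G p = \sum_i \sum_j G (i, j).
  by rewrite pair_bigA; apply: eq_bigr => -[].
rewrite /sesq; transitivity (\sum_i \sum_j \sum_k \sum_l
   (w * ((u i * (x (i, j))^*) * B j l * ((u k)^* * x (k, l))))).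
  rewrite pairE; apply: eq_bigr => i _; apply: eq_bigr => j _.
  rewrite pairE; apply: eq_bigr => k _; apply: eq_bigr => l _ /=.
  by ring.
rewrite mulr_sumr exchange_big; apply: eq_bigr => j _ /=.
rewrite mulr_sumr; under eq_bigr do rewrite exchange_big /=.
rewrite exchange_big; apply: eq_bigr => l _ /=.
rewrite yc /y mulr_suml mulr_suml mulr_sumr; apply: eq_bigr => i _.
by rewrite mulr_sumr mulr_sumr; apply: eq_bigr => k _; rewrite mulrA.
Qed.

End Kronecker.

Lemma psd_kron (I J : finType) (A : I -> I -> C) (B : J -> J -> C) :
  is_psd A -> is_psd B -> is_psd (fun a b : I * J => A a.1 b.1 * B a.2 b.2).
Proof.
move=> + pB; case/psd_rank1_combination => k [w [u [w0 Ae]]].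
apply: (@eq_psd _ (fun a b => \sum_(l < k) w l * u l a.1 * (u l b.1)^* * B a.2 b.2)).
  by move=> a b; rewrite Ae mulr_suml.
by apply: psd_sum => l; exact: psd_rank1_kron.
Qed.

End PsdForms.

Local Open Scope classical_set_scope.

Section HilbertStarSpace.
Variables (R : realType) (H : lmodType R[i]) (ip : H -> H -> R[i]) (hs : H -> H).
Hypothesis hH : hilbert_star_space ip hs.

Lemma ip0l z : ip 0 z = 0.
Proof.
have := ip_linl hH 1 0 0 z; rewrite scaler0 addr0 mul1r => /esym.
by rewrite -[X in _ = X]addr0 => /addrI.
Qed.

Lemma ip_suml (T : Type) (r : seq T) (c : T -> R[i]) (p : T -> H) z :
  ip (\sum_(t <- r) c t *: p t) z = \sum_(t <- r) c t * ip (p t) z.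
Proof.
elim: r => [|a r IH]; first by rewrite !big_nil ip0l.
by rewrite !big_cons (ip_linl hH) IH.
Qed.

Lemma hs0 : hs 0 = 0.
Proof.
have := hs_semilinear hH 1 0 0; rewrite scaler0 addr0 conjC1 scale1r => /esym.
by rewrite -[X in _ = X]addr0 => /addrI.
Qed.

Lemma hs_sum (T : Type) (r : seq T) (c : T -> R[i]) (p : T -> H) :
  hs (\sum_(t <- r) c t *: p t) = \sum_(t <- r) (c t)^* *: hs (p t).
Proof.
elim: r => [|a r IH]; first by rewrite !big_nil hs0.
by rewrite !big_cons (hs_semilinear hH) IH.
Qed.

Lemma hnorm0 : hnorm ip 0 = 0.
Proof. by rewrite /hnorm ip0l sqrtr0. Qed.

Lemma cone_e0 e : cone_e ip hs e 0.
Proof. by split; [exact: hs0 | rewrite hnorm0 ip0l mulr0]. Qed.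

Lemma cone_e_eq0 e z : cone_e ip hs e z -> ip z e = 0 -> z = 0.
Proof.
case=> _ + ze0; rewrite ze0 mulr0 lecR => zn.
have /eqP : hnorm ip z = 0 by apply/eqP; rewrite eq_le zn sqrtr_ge0.
rewrite sqrtr_eq0 => Rezz; apply: (ip_eq0 hH).
have := ip_ge0 hH z; rewrite lecE /= => /andP[/eqP Imzz Rezz0].
by apply/eqP; rewrite eq_complex /= Imzz eqxx andbT eq_le Rezz Rezz0.
Qed.

End HilbertStarSpace.

Section ContinuousComplexFunctions.
Variables (R : realType) (X : ptopologicalType).
Implicit Types (u v : X -> R[i]) (f : X -> R).

Lemma cts_cst (c : R[i]) : cts (fun _ : X => c).
Proof. by split; exact: cst_continuous. Qed.

Lemma cts_real f : continuous f -> cts (fun x => (f x)%:C%C).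
Proof. by move=> cf; split => //=; exact: cst_continuous. Qed.

Lemma ctsD u v : cts u -> cts v -> cts (fun x => u x + v x).
Proof.
case=> [ru iu] [rv iv]; split => x.
- have -> : (fun x => complex.Re (u x + v x)) =
      (fun x => complex.Re (u x) + complex.Re (v x)).
    by apply/funext => y; case: (u y); case: (v y).
  exact: (continuousD (ru x) (rv x)).
- have -> : (fun x => complex.Im (u x + v x)) =
      (fun x => complex.Im (u x) + complex.Im (v x)).
    by apply/funext => y; case: (u y); case: (v y).
  exact: (continuousD (iu x) (iv x)).
Qed.

Lemma ctsM u v : cts u -> cts v -> cts (fun x => u x * v x).
Proof.
case=> [ru iu] [rv iv]; split => x.
- have -> : (fun x => complex.Re (u x * v x)) = (fun x =>
      complex.Re (u x) * complex.Re (v x) + - (complex.Im (u x) * complex.Im (v x))).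
    by apply/funext => y; case: (u y); case: (v y).
  exact: (continuousD (continuousM (ru x) (rv x))
                      (continuousN (continuousM (iu x) (iv x)))).
- have -> : (fun x => complex.Im (u x * v x)) = (fun x =>
      complex.Re (u x) * complex.Im (v x) + complex.Im (u x) * complex.Re (v x)).
    by apply/funext => y; case: (u y) => a b; case: (v y) => c d /=; rewrite addrC.
  exact: (continuousD (continuousM (ru x) (iv x)) (continuousM (iu x) (rv x))).
Qed.

Lemma cts_sum (T : Type) (r : seq T) (c : T -> R[i]) (h : T -> X -> R[i]) :
  (forall t, cts (h t)) -> cts (fun x => \sum_(t <- r) c t * h t x).
Proof.
move=> ch; elim: r => [|a r IH].
  by under eq_fun do rewrite big_nil; exact: cts_cst.
under eq_fun do rewrite big_cons.
by apply: ctsD => //; apply: ctsM => //; exact: cts_cst.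
Qed.

Variables (H : lmodType R[i]) (ip : H -> H -> R[i]) (hs : H -> H) (e : H).
Variable T : (X -> R[i]) -> H.
Hypothesis hT : unital_positive ip hs e T.

Lemma T_linear a u v : cts u -> cts v -> T (fun x => a * u x + v x) = a *: T u + T v.
Proof. by case: hT => + _; apply. Qed.

Lemma T0 : T (fun _ => 0) = 0.
Proof.
have := T_linear 1 (cts_cst 0) (cts_cst 0); rewrite scale1r.
under eq_fun do rewrite mulr0 addr0.
by move/esym; rewrite -[X in _ = X]addr0 => /addrI.
Qed.

Lemma T_sum (I : Type) (r : seq I) (c : I -> R[i]) (h : I -> X -> R[i]) :
  (forall t, cts (h t)) ->
  T (fun x => \sum_(t <- r) c t * h t x) = \sum_(t <- r) c t *: T (h t).
Proof.
move=> ch; elim: r => [|a r IH].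
  by rewrite big_nil -T0; under eq_fun do rewrite big_nil.
rewrite big_cons -IH -T_linear //; last exact: cts_sum.
by under eq_fun do rewrite big_cons.
Qed.

Lemma T_cone v : cts v -> (forall x, 0 <= v x) -> cone_e ip hs e (T v).
Proof. by case: hT => _ [_]; apply. Qed.

End ContinuousComplexFunctions.

Section BorelDirac.
Variables (R : realType) (X : ptopologicalType).

Lemma borel_closed (A : set X) : closed A -> measurable (A : set (borelX X)).
Proof.
move=> cA; rewrite -[A]setCK; apply: measurableC; apply: sub_sigma_algebra.
by rewrite /= openC.
Qed.

Lemma continuous_measurable_funE (f : X -> R) (D : set X) : continuous f ->
  measurable_fun (D : set (borelX X)) (fun x : borelX X => (f x)%:E).
Proof.
move=> cf; apply/measurable_EFinP.
apply: (@measurable_funS _ _ (borelX X) _ setT) => //.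
apply: (measurability _ (RGenOpens.measurableE R)).
move=> _ [_ [a [b ->]] <-]; rewrite setTI; apply: sub_sigma_algebra.
by move/continuousP: cf; apply; exact: interval_open.
Qed.

Definition dirac_borel (x : X) : {measure set (borelX X) -> \bar R} :=
  @dirac _ (borelX X) x R.

Lemma cint_dirac (x : X) (v : X -> R[i]) : cts v -> cint (dirac_borel x) v = v x.
Proof.
case=> cr ci; rewrite /cint /dirac_borel !integral_dirac //;
  try exact: continuous_measurable_funE.
by rewrite !diracE !in_setT -!EFinM /=; case: (v x) => a b /=; rewrite !mul1r.
Qed.

Lemma radon_dirac (x : X) : hausdorff_space X -> radon (dirac_borel x).
Proof.
move=> hX; have dE (A : set X) : dirac_borel x A = ((x \in A)%:R)%:E by [].
split; first by rewrite dE in_setT ltry.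
split => A mA; rewrite dE.
  have [Ax|nAx] := pselect (A x).
    rewrite mem_set //; apply/esym/eqP; rewrite eq_le; apply/andP; split.
      apply: ereal_inf_lbound; exists setT; first by split => //; exact: openT.
      by rewrite dE in_setT.
    by apply: le_ereal_inf_tmp => _ [U [oU AU] <-]; rewrite dE mem_set //; exact: AU.
  rewrite memNset //; apply/esym/eqP; rewrite eq_le; apply/andP; split.
    apply: ereal_inf_lbound; exists (~` [set x]).
      split; last by move=> y Ay /= yx; apply: nAx; rewrite -yx.
      by rewrite openC; apply: accessible_closed_set1; exact: hausdorff_accessible.
    by rewrite dE memNset //=.
  by apply: le_ereal_inf_tmp => _ [U _ <-]; rewrite dE lee_fin ler0n.
have [Ax|nAx] := pselect (A x).
  rewrite mem_set //; apply/esym/eqP; rewrite eq_le; apply/andP; split.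
    by apply: ge_ereal_sup => _ [K _ <-]; rewrite dE lee_fin; case: (x \in K).
  apply: ereal_sup_ubound; exists [set x].
    by split; [exact: compact_set1 | move=> y ->].
  by rewrite dE mem_set.
rewrite memNset //; apply/esym/eqP; rewrite eq_le; apply/andP; split.
  apply: ge_ereal_sup => _ [K [_ KA] <-]; rewrite dE memNset //.
  by move=> Kx; apply: nAx; exact: KA.
apply: ereal_sup_ubound; exists set0; first by split; [exact: compact0 | done].
by rewrite dE memNset.
Qed.

End BorelDirac.

Lemma separable_of_expansion (R : realType) (X : ptopologicalType)
    (H : lmodType R[i]) (ip : H -> H -> R[i]) (hs : H -> H) (e : H)
    (T : (X -> R[i]) -> H) (s : seq X) (p : X -> H) :
  hilbert_star_space ip hs -> hausdorff_space X ->
  (forall x, x \in s -> cone_e ip hs e (p x)) ->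
  (forall v, cts v -> T v = \sum_(x <- s) v x *: p x) ->
  separable_map ip hs e T.
Proof.
move=> hH hX cp Tv.
pose q l := @dirac_borel R X (nth point s l).
pose p' l := if (l < size s)%N then p (nth point s l) else 0.
exists q, p'; split; first by move=> l; exact: radon_dirac.
split.
  by move=> l; rewrite /p'; case: ifP => sl; [apply: cp; exact: mem_nth | exact: cone_e0].
move=> v cv; apply: cvg_near_cst; exists (size s) => // k /= sk.
suff -> : \sum_(l < k) cint (q l) v *: p' l = T v by rewrite subrr (hnorm0 hH).
rewrite Tv // (big_nth point) -(big_mkord xpredT (fun l => cint (q l) v *: p' l)).
rewrite (big_cat_nat (n := size s)) //=.
rewrite [X in _ + X]big_nat_cond [X in _ + X]big1 ?addr0; last first.
  by move=> l /andP[/andP[sl _] _]; rewrite /p' ltnNge sl scaler0.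
rewrite big_nat_cond [RHS]big_nat_cond; apply: eq_bigr => l /andP[/andP[_ ls] _].
by rewrite /q cint_dirac // /p' ls.
Qed.

Section FiniteDiscreteDomain.
Variables (R : realType) (H : lmodType R[i]) (ip : H -> H -> R[i]) (hs : H -> H) (e : H).
Hypothesis hH : hilbert_star_space ip hs.
Variables (n : nat) (T : (linfty n -> R[i]) -> H).
Hypothesis hT : unital_positive ip hs e T.

Lemma linfty_cts (v : linfty n -> R[i]) : cts v.
Proof. by split; apply/continuousP => A _; exact: discrete_open. Qed.

Definition indicator (t : linfty n) : linfty n -> R[i] := fun s => (s == t)%:R.

Lemma T_indicator_expansion (v : linfty n -> R[i]) :
  T v = \sum_(t : 'I_n.-1.+1) v t *: T (indicator t).
Proof.
rewrite -(T_sum hT _ _ (fun t => linfty_cts (indicator t))).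
congr T; apply/funext => s; rewrite -[LHS](sum_delta s v).
by apply: eq_bigr => t _; rewrite /indicator eq_sym mulrC.
Qed.

Lemma cone_T_indicator t : cone_e ip hs e (T (indicator t)).
Proof. by apply: (T_cone hT); [exact: linfty_cts | move=> s; rewrite ler0n]. Qed.

Lemma linfty_separable : separable_map ip hs e T.
Proof.
apply: (@separable_of_expansion _ (linfty n) _ _ _ _ T (index_enum 'I_n.-1.+1)
  (fun t => T (indicator t)) hH) => //.
- exact: discrete_hausdorff.
- by move=> t _; exact: cone_T_indicator.
- by move=> v _; exact: T_indicator_expansion.
Qed.

Lemma linfty_max_cone m (v : 'I_m -> 'I_m -> linfty n -> R[i]) :
  (forall t : linfty n, psd (fun i j => v i j t)) ->
  max_cone_e ip hs e (fun i j => T (v i j)).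
Proof.
move=> pv; split.
  move=> i k; rewrite !T_indicator_expansion (hs_sum hH); apply: eq_bigr => t _.
  have [-> _] := cone_T_indicator t.
  by rewrite -(psd_herm (pv t : is_psd _)).
move=> N eta [_ eta_dual]; apply: (eq_psd _ (psd_sum (fun t : 'I_n.-1.+1 =>
  psd_kron (pv t : is_psd _) (eta_dual _ (cone_T_indicator t))))).
by move=> a b /=; rewrite T_indicator_expansion (ip_suml hH).
Qed.

End FiniteDiscreteDomain.

Section FiniteAtomicMeasure.
Variables (R : realType) (H : lmodType R[i]) (ip : H -> H -> R[i]) (hs : H -> H) (e : H).
Hypothesis hH : hilbert_star_space ip hs.
Variables (X : ptopologicalType) (T : (X -> R[i]) -> H).
Hypotheses (hX : hausdorff_space X) (cX : compact [set: X]).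
Hypothesis hT : unital_positive ip hs e T.
Variables (mu : {measure set borelX X -> \bar R}) (F : set X).
Hypothesis hmu : forall v, cts v -> ip (T v) e = cint mu v.
Hypotheses (fF : finite_set F) (muF : mu (~` F) = 0%E).

Lemma finite_set_closed (A : set X) : finite_set A -> closed A.
Proof.
move=> fA; have -> : A = \bigcup_(x in A) [set x].
  by apply/seteqP; split => [x Ax|x [y Ay ->]] //; exists x.
apply: closed_bigcup => // x _; apply: accessible_closed_set1.
exact: hausdorff_accessible.
Qed.

Lemma integral_eq0_of_vanishing (w : X -> R) : continuous w ->
  (forall x, 0 <= w x) -> (forall x, F x -> w x = 0) ->
  (\int[mu]_x (w x)%:E = 0)%E.
Proof.
move=> cw w0 wF.
have mF : measurable (F : set (borelX X)) by apply: borel_closed; exact: finite_set_closed.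
have mFC : measurable (~` F : set (borelX X)) by exact: measurableC.
rewrite -(setUCr F) ge0_integral_setU //.
- rewrite integral0_eq ?add0e; last by move=> x Fx; rewrite wF.
  by apply: null_set_integral => //; exact: continuous_measurable_funE.
- exact: continuous_measurable_funE.
- by move=> x _; rewrite lee_fin.
- by rewrite disj_set2E setICr.
Qed.

Lemma T_ge0_vanishing (w : X -> R) : continuous w -> (forall x, 0 <= w x) ->
  (forall x, F x -> w x = 0) -> T (fun x => (w x)%:C%C) = 0.
Proof.
move=> cw w0 wF; apply: (cone_e_eq0 hH (e := e)).
  by apply: (T_cone hT); [exact: cts_real | move=> x; rewrite ler0c].
rewrite hmu; last exact: cts_real.
by rewrite /cint /= integral_eq0_of_vanishing // integral0.
Qed.

Lemma T_real_vanishing (w : X -> R) : continuous w ->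
  (forall x, F x -> w x = 0) -> T (fun x => (w x)%:C%C) = 0.
Proof.
move=> cw wF; pose wp x := Num.max (w x) 0; pose wn x := Num.max (- w x) 0.
have cwp : continuous wp.
  by move=> x; exact: (@continuous_max _ _ w _ x (cw x) (@cst_continuous X R^o 0 x)).
have cwn : continuous wn.
  move=> x; exact: (@continuous_max _ _ (fun y => - w y) _ x
    (continuousN (cw x)) (@cst_continuous X R^o 0 x)).
have -> : (fun x => (w x)%:C%C) = (fun x => (-1) * (wn x)%:C%C + (wp x)%:C%C).
  apply/funext => x; rewrite mulN1r addrC -rmorphB /=; congr (_%:C)%C.
  rewrite /wp /wn; have [w0|w0] := leP 0 (w x).
    by rewrite (max_idPr _) ?subr0 // oppr_le0.
  by rewrite (max_idPl _) ?sub0r ?opprK // oppr_ge0 ltW.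
have wp0 x : 0 <= wp x by rewrite le_max lexx orbT.
have wn0 x : 0 <= wn x by rewrite le_max lexx orbT.
have wpF x : F x -> wp x = 0 by move=> Fx; rewrite /wp wF // maxxx.
have wnF x : F x -> wn x = 0 by move=> Fx; rewrite /wn wF // oppr0 maxxx.
rewrite (T_linear hT) ?(T_ge0_vanishing cwp) ?(T_ge0_vanishing cwn) ?scaler0 ?addr0 //.
all: exact: cts_real.
Qed.

Lemma T_vanishing (g : X -> R[i]) : cts g -> (forall x, F x -> g x = 0) -> T g = 0.
Proof.
case=> cr ci gF.
have -> : g = fun x => 'i%C * (complex.Im (g x))%:C%C + (complex.Re (g x))%:C%C.
  by apply/funext => x; rewrite addrC -complexE.
rewrite (T_linear hT) ?T_real_vanishing ?scaler0 ?addr0 //; try exact: cts_real.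
all: by move=> x Fx; rewrite gF.
Qed.

Lemma urysohn_bump (x : X) : F x -> exists h : X -> R,
  [/\ continuous h, forall y, 0 <= h y, h x = 1 & forall y, F y -> y != x -> h y = 0].
Proof.
move=> Fx; have nX : normal_space X := compact_normal hX cX.
have cA : closed (F `\ x) by apply: finite_set_closed; exact: finite_setD.
have cB : closed [set x] by apply: accessible_closed_set1; exact: hausdorff_accessible.
have dis : (F `\ x) `&` [set x] = set0.
  by apply/seteqP; split => // y [[_ /= yx] /= yx']; exact: yx.
have sep := (@normal_separatorP R X).1 nX _ _ cA cB dis.
have [f [cf f01 fA fB]] := (@uniform_separatorP X R _ _).1 sep.
exists f; split => //.
- move=> y; have := f01 (f y) (ex_intro2 _ _ y I erefl).
  by rewrite /= in_itv /= => /andP[].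
- by apply: fB; exists x.
- move=> y Fy yx; apply: fA; exists y => //; split => //= yx'.
  by move: yx; rewrite yx' eqxx.
Qed.

Lemma finite_atomic_separable : separable_map ip hs e T.
Proof.
have /choice[h hP] : forall x, exists hx : X -> R, [/\ continuous hx,
    forall y, 0 <= hx y & F x -> hx x = 1 /\ forall y, F y -> y != x -> hx y = 0].
  move=> x; have [Fx|nFx] := pselect (F x).
    by have [hx [? ? ? ?]] := urysohn_bump Fx; exists hx.
  by exists (fun _ => 0); split => //; exact: cst_continuous.
have ch x : cts (fun y => (h x y)%:C%C) by have [cx _ _] := hP x; exact: cts_real.
have [S FS] := finite_fsetP.1 fF.
apply: (@separable_of_expansion _ _ _ _ _ _ _ S (fun x => T (fun y => (h x y)%:C%C)) hH hX).
  by move=> x _; apply: (T_cone hT) => // y; have [_ h0 _] := hP x; rewrite ler0c.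
move=> v cv; pose w y := \sum_(x <- S) v x * (h x y)%:C%C.
have wF y : F y -> v y + (-1) * w y = 0.
  move=> Fy; suff -> : w y = v y by rewrite mulN1r subrr.
  have [_ _ /(_ Fy) [hyy _]] := hP y.
  rewrite /w (bigD1_seq y) ?fset_uniq //=; last by rewrite FS in Fy.
  rewrite hyy mulr1 big_seq_cond big1 ?addr0 // => x /andP[xS xy].
  have Fx : F x by rewrite FS.
  by have [_ _ /(_ Fx) [_ ->]] := hP x; rewrite ?mulr0 // eq_sym.
have cw : cts w by exact: cts_sum.
have cg : cts (fun y => v y + (-1) * w y).
  by apply: ctsD => //; apply: ctsM => //; exact: cts_cst.
transitivity (T (fun y => 1 * (v y + (-1) * w y) + w y)).
  by congr T; apply/funext => y; rewrite mul1r mulN1r subrK.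
by rewrite (T_linear hT) // (T_vanishing cg wF) scaler0 add0r (T_sum hT).
Qed.

End FiniteAtomicMeasure.

Theorem mainTheorem15 (R : realType) (H : lmodType R[i])
    (ip : H -> H -> R[i]) (hs : H -> H) (e : H) :
  hilbert_star_space ip hs -> unital_vector ip hs e ->
  (forall (X : ptopologicalType) (T : (X -> R[i]) -> H),
     hausdorff_space X -> compact [set: X] ->
     unital_positive ip hs e T ->
     assoc_measure_finite_atomic ip e T ->
     separable_map ip hs e T) /\
  (forall (n : nat) (T : (linfty n -> R[i]) -> H), (0 < n)%N ->
     @unital_positive R (linfty n) H ip hs e T ->
     @separable_map R (linfty n) H ip hs e T /\
     forall (m : nat) (v : 'I_m -> 'I_m -> linfty n -> R[i]),
       (forall t : linfty n, psd (fun i j => v i j t)) ->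
       max_cone_e ip hs e (fun i j => T (v i j))).
Proof.
move=> hH _; split.
  move=> X T hX cX hT [mu [_ [_ [hmu [F [fF muF]]]]]].
  exact: (finite_atomic_separable hH hX cX hT hmu fF muF).
move=> n T _ hT; split; first exact: (linfty_separable hH hT).
by move=> m v; exact: (linfty_max_cone hH hT).
Qed.
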